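(* Let $M$ be a REP-expanded cost sharing mechanism for a GND instance. Then for every $\varrho \ge 1$, the GND game induced by $M$ is $\big(\gamma_\alpha + \lambda_\alpha \varrho^{\max_j \alpha_j},\ 1/(2\varrho)\big)$-smooth, where $$\gamma_\alpha = \max_{e\in E}\min_{j\in[q]}\Big(\frac{1}{\alpha_j-1}\cdot\frac{\sigma_e}{\xi_{e,j}}\Big)^{1/\alpha_j}$$ and $\lambda_\alpha>0$ is a constant depending only on $q$, $\alpha_1,\dots,\alpha_q$ (through the REP-expansion constants $K_j, z_{k,j}$ of $M$, which depend only on the $\alpha_j$).
   Context: GND instance: finite resource set $E$; requests (players) $i \in [N]$, each with a reply (strategy) collection $P_i \subseteq 2^E$ and a weight vector $w_i \in \mathbb{Z}_{\geq 1}^E$; constants $q \in \mathbb{Z}_{\ge1}$, $\alpha_1,\dots,\alpha_q > 1$; for each $e$, $\sigma_e \geq 0$ and $\xi_{e,j} \geq 0$ (at least one $\xi_{e,j}>0$), and cost function $F_e(0)=0$, $F_e(l)=\sigma_e+\sum_j \xi_{e,j} l^{\alpha_j}$ for $l>0$. Strategy profile $p\in P=P_1\times\dots\times P_N$; load $l_e^p=\sum_{i: e\in p_i} w_i(e)$; total cost $C(p)=\sum_e F_e(l_e^p)$. Terms with $\xi_{e,j}=0$ in $\min_j$ are interpreted as $+\infty$. A cost sharing mechanism (CSM) $M=\{f_{i,e}\}$ assigns cost shares $f_{i,e}(p)\ge 0$ with $\sum_i f_{i,e}(p)=F_e(l_e^p)$; it is separable and uniform: $f_{i,e}(p)=0$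 if $e\notin p_i$, and $f_{i,e}(p)$ depends only on $w_i(e)$ and the multiset of weights of the other players using $e$. Individual cost $C_i(p)=\sum_e f_{i,e}(p)$. $M$ is REP-expanded if for each $j\in[q]$ there are a nonnegative integer $K_j$ and nonnegative constants $x_{k,j}\in[0,\alpha_j-1]$, $y_{k,j}\in[1,\alpha_j]$, $z_{k,j}$ ($k\in[K_j]$), depending only on $\alpha_j$, with $x_{k,j}+y_{k,j}=\alpha_j$, such that for every profile $p$, player $i$ and resource $e\in p_i$: $$f_{i,e}(p)\le \sigma_e+\sum_{j\in[q]}\xi_{e,j}\sum_{k=1}^{K_j} z_{k,j}\,(l_e^p-w_i(e))^{x_{k,j}}(w_i(e))^{y_{k,j}}.$$ The game is $(\lambda,\mu)$-smooth ($\lambda>0$, $0<\mu<1$) if $\sum_i C_i(p'_i,p_{-i})\le\lambda C(p')+\mu C(p)$ for all $p,p'\in P$, where $(p'_i,p_{-i})$ is $p$ with the $i$-th coordinate replaced by $p'_i$. *)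

From HB Require Import structures.
From mathcomp Require Import all_boot all_order all_algebra.
From mathcomp Require Import all_classical all_reals all_analysis.
Set Implicit Arguments. Unset Strict Implicit. Unset Printing Implicit Defensive.
Import Order.TTheory GRing.Theory Num.Theory.
Local Open Scope ring_scope.

Section GND.
Variables (R : realType) (E : finType) (N : nat).

Definition profile := {ffun 'I_N -> {set E}}.

Definition valid (Pset : 'I_N -> {set {set E}}) (p : profile) : Prop :=
  forall i, p i \in Pset i.

Definition upd (p p' : profile) (i : 'I_N) : profile :=
  [ffun j => if j == i then p' j else p j].

Definition load (w : 'I_N -> E -> nat) (p : profile) (e : E) : nat :=
  (\sum_(i < N | e \in p i) w i e)%N.

Definition Fcost (q : nat) (alpha : 'I_q -> R) (sigma : E -> R)
  (xi : E -> 'I_q -> R) (e : E) (l : nat) : R :=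
  if l == 0%N then 0 else sigma e + \sum_(j < q) xi e j * (l%:R `^ alpha j).

Definition total_cost (q : nat) (alpha : 'I_q -> R) (sigma : E -> R) (xi : E -> 'I_q -> R) (w : 'I_N -> E -> nat) (p : profile) : R :=
  \sum_(e : E) Fcost alpha sigma xi e (load w p e).

(* a CSM: f i e p = cost share of player i on resource e at profile p *)
Definition indiv_cost (f : 'I_N -> E -> profile -> R) (p : profile) (i : 'I_N) : R :=
  \sum_(e : E) f i e p.

Definition others_weights (w : 'I_N -> E -> nat) (p : profile) (i : 'I_N) (e : E)
  : seq nat := [seq w j e | j <- enum 'I_N & (j != i) && (e \in p j)].

Definition is_CSM (q : nat) (alpha : 'I_q -> R) (sigma : E -> R) (xi : E -> 'I_q -> R) (Pset : 'I_N -> {set {set E}})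
  (w : 'I_N -> E -> nat) (f : 'I_N -> E -> profile -> R) : Prop :=
  [/\ (forall p i e, valid Pset p -> 0 <= f i e p),
      (forall p e, valid Pset p ->
         \sum_(i < N) f i e p = Fcost alpha sigma xi e (load w p e)),
      (forall p i e, valid Pset p -> e \notin p i -> f i e p = 0) &
      (forall p p' i i' e, valid Pset p -> valid Pset p' ->
         e \in p i -> e \in p' i' -> w i e = w i' e ->
         perm_eq (others_weights w p i e) (others_weights w p' i' e) ->
         f i e p = f i' e p')].

Definition REP_bound q (sigma : E -> R) (xi : E -> 'I_q -> R)
  (K : 'I_q -> nat) (x y z : forall j : 'I_q, 'I_(K j) -> R)
  (Pset : 'I_N -> {set {set E}}) (w : 'I_N -> E -> nat)
  (f : 'I_N -> E -> profile -> R) : Prop :=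
  forall p i e, valid Pset p -> e \in p i ->
    f i e p <= sigma e + \sum_(j < q) xi e j *
      \sum_(k < K j) z j k * (((load w p e - w i e)%N)%:R `^ x j k)
                           * ((w i e)%:R `^ y j k).

Definition smooth (q : nat) (alpha : 'I_q -> R) (sigma : E -> R) (xi : E -> 'I_q -> R) (Pset : 'I_N -> {set {set E}})
  (w : 'I_N -> E -> nat) (f : 'I_N -> E -> profile -> R) (lam mu : R) : Prop :=
  forall p p', valid Pset p -> valid Pset p' ->
    \sum_(i < N) indiv_cost f (upd p p' i) i
      <= lam * total_cost alpha sigma xi w p' + mu * total_cost alpha sigma xi w p.

End GND.

(* gamma_alpha = max_e min_{j : xi_{e,j} > 0} ((1/(alpha_j-1)) sigma_e/xi_{e,j})^(1/alpha_j);
   terms with xi_{e,j} = 0 are +oo (they are excluded from the min);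
   the max over an empty resource set is taken to be 0. *)
Definition gamma_alpha (R : realType) (E : finType) (q : nat) (alpha : 'I_q -> R)
  (sigma : E -> R) (xi : E -> 'I_q -> R) : R :=
  fine (\big[Order.max/0%E]_(e : E)
          \big[Order.min/+oo%E]_(j < q | xi e j != 0)
             (((alpha j - 1)^-1 * (sigma e / xi e j)) `^ (alpha j)^-1)%:E).

(* max_j alpha_j (alpha_j > 1 > 0, so seeding with 0 is harmless) *)
Definition max_alpha (R : realType) (q : nat) (alpha : 'I_q -> R) : R :=
  \big[Num.max/0]_(j < q) alpha j.

(* Fix a resource e with loads L under p and l' under p'.  A player deviating
   to p'_i meets on e at most the load L of the others, so by REP-expansion its
   share is at most sigma_e + sum_j xi_ej sum_k z_jk L^x_jk w_i^y_jk; summing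
   over the users of e in p' and using superadditivity of t |-> t^y for y >= 1
   gives sigma_e l' + sum_j xi_ej sum_k z_jk L^x_jk l'^y_jk.  Comparing L with
   M l' splits each mixed term as L^x l'^y <= M^(a-1) l'^a + L^a / M, and
   M = 2 rho (1 + sum_k z_jk) leaves weight at most 1/(2 rho) on L^a.  The
   fixed cost is absorbed by sigma_e l' <= gamma_alpha F_e(l'), a Young
   inequality whose optimal constant is exactly the term defining gamma_alpha. *)

From mathcomp Require Import all_boot all_order all_algebra.
From mathcomp Require Import all_classical all_reals all_analysis.
From mathcomp Require Import ring lra.
Import Order.TTheory GRing.Theory Num.Theory.
Local Open Scope ring_scope.

Section PowRInequalities.
Context {R : realType}.
Implicit Types a l s u t : R.

Lemma ler1D_powR_div u a : 0 <= u -> 1 < a -> u <= 1 + u `^ a / (a - 1).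
Proof.
move=> u0 a1; have a0 : 0 < a by exact: lt_trans a1.
have a10 : 0 < a - 1 by rewrite subr_gt0.
have conj : a^-1 + (a / (a - 1))^-1 = 1 by field; rewrite !gt_eqF.
have := conjugate_powR u0 ler01 a0 (divr_gt0 a0 a10) conj.
rewrite mulr1 powR1 mul1r addrC => /le_trans; apply; apply: lerD.
  by rewrite invf_div ler_pdivrMr // mul1r gerBl.
by rewrite ler_wpM2l ?powR_ge0 // lef_pV2 ?posrE // gerBl.
Qed.

Lemma mulr_le_powR_cost s t a l : 0 <= s -> 0 < t -> 1 < a -> 0 <= l ->
  s * l <= ((a - 1)^-1 * (s / t)) `^ a^-1 * (s + t * l `^ a).
Proof.
move=> s0 t0 a1 l0; have a0 : 0 < a by exact: lt_trans a1.
have a10 : 0 < a - 1 by rewrite subr_gt0.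
set c := _ `^ a^-1.
have [->|s_neq0] := eqVneq s 0.
  by rewrite mul0r mulr_ge0 ?powR_ge0 // addr_ge0 // mulr_ge0 ?powR_ge0 // ltW.
have s_gt0 : 0 < s by rewrite lt_def s_neq0 s0.
have c_gt0 : 0 < c by rewrite powR_gt0 // mulr_gt0 ?invr_gt0 ?divr_gt0.
have ca : c `^ a = (a - 1)^-1 * (s / t).
  by rewrite -powRrM mulVf ?gt_eqF ?powRr1 // mulr_ge0 ?invr_ge0 ?divr_ge0 ?ltW.
have -> : l = c * (l / c) by rewrite mulrCA mulfV ?gt_eqF // mulr1.
rewrite powRM ?divr_ge0 ?(ltW c_gt0) // ca.
have -> : c * (s + t * ((a - 1)^-1 * (s / t) * (l / c) `^ a))
        = s * c * (1 + (l / c) `^ a / (a - 1)) by field; rewrite !gt_eqF.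
rewrite mulrA ler_pM2l ?mulr_gt0 //.
by apply: ler1D_powR_div; rewrite ?divr_ge0 ?(ltW c_gt0).
Qed.

Lemma mul_powR_le_split L l M a x y : 0 <= L -> 0 <= l -> 1 <= M ->
  0 <= x <= a - 1 -> x + y = a ->
  L `^ x * l `^ y <= M `^ (a - 1) * l `^ a + L `^ a / M.
Proof.
move=> L0 l0 M1 /andP[x0 xa] xy; have M0 : 0 < M by exact: lt_le_trans M1.
have y1 : 1 <= y by lra.
have a0 : 0 < a by lra.
have powRxy t : t `^ a = t `^ x * t `^ y by rewrite -xy powRD // xy gt_eqF.
have [LMl|MlL] := lerP L (M * l).
  apply: le_trans (_ : M `^ (a - 1) * l `^ a <= _); last first.
    by rewrite lerDl divr_ge0 ?powR_ge0 ?ltW.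
  rewrite powRxy mulrA ler_wpM2r ?powR_ge0 //.
  apply: le_trans (_ : (M * l) `^ x <= _).
    by apply: ge0_ler_powR; rewrite ?nnegrE ?mulr_ge0 ?(ltW M0).
  by rewrite powRM ?(ltW M0) // ler_wpM2r ?powR_ge0 // ler_powR.
have L0' : 0 < L by apply: le_lt_trans MlL; rewrite mulr_ge0 ?(ltW M0).
apply: le_trans (_ : L `^ a / M <= _); last by rewrite lerDr mulr_ge0 ?powR_ge0.
have lLM : l <= L / M by rewrite ler_pdivlMr // mulrC ltW.
apply: le_trans (_ : L `^ x * (L / M) `^ y <= _).
  rewrite ler_wpM2l ?powR_ge0 //.
  apply: ge0_ler_powR; rewrite ?nnegrE ?divr_ge0 ?(ltW M0) ?(ltW L0') //.
  exact: le_trans y1.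
rewrite powRM ?invr_ge0 ?(ltW M0) ?(ltW L0') // powRxy -mulrA.
rewrite !ler_wpM2l ?powR_ge0 //.
by apply: ge1r_powR; rewrite // invr_gt0 M0 invf_le1.
Qed.

Definition split_coef {I : finType} a (z : I -> R) :=
  (\sum_i z i) * (2 * (1 + \sum_i z i)) `^ (a - 1).

Lemma split_coef_ge0 {I : finType} a (z : I -> R) :
  (forall i, 0 <= z i) -> 0 <= split_coef a z.
Proof. by move=> z0; rewrite mulr_ge0 ?powR_ge0 ?sumr_ge0. Qed.

Lemma sum_mul_powR_le_split {I : finType} (z x y : I -> R) a L l rho :
  0 <= L -> 0 <= l -> 1 <= rho -> (forall i, 0 <= z i) ->
  (forall i, 0 <= x i <= a - 1) -> (forall i, x i + y i = a) ->
  \sum_i z i * L `^ x i * l `^ y i <=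
    split_coef a z * rho `^ (a - 1) * l `^ a + (2 * rho)^-1 * L `^ a.
Proof.
move=> L0 l0 rho1 z0 hx hxy; have rho0 : 0 < rho by exact: lt_le_trans rho1.
set Z := \sum_i z i; have Z0 : 0 <= Z by exact: sumr_ge0.
pose M := 2 * rho * (1 + Z); have M1 : 1 <= M by rewrite /M; nra.
have M0 : 0 < M by exact: lt_le_trans M1.
apply: le_trans (_ : \sum_i z i * (M `^ (a - 1) * l `^ a + L `^ a / M) <= _).
  by apply: ler_sum => i _; rewrite -mulrA ler_wpM2l ?mul_powR_le_split.
rewrite -mulr_suml mulrDr; apply: lerD.
  rewrite /split_coef -/Z /M mulrAC.
  rewrite (powRM _ (x := 2 * (1 + Z))) ?mulr_ge0 ?addr_ge0 ?(ltW rho0) //.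
  by rewrite !mulrA.
rewrite mulrCA mulrC ler_wpM2r ?powR_ge0 // ler_pdivrMr // /M mulrA.
by rewrite mulVf ?mul1r ?lerDr // gt_eqF // mulr_gt0.
Qed.

Lemma sum_powR_le_powR_sum {I : finType} (P : pred I) (F : I -> R) t :
  (forall i, P i -> 0 <= F i) -> 1 <= t ->
  \sum_(i | P i) F i `^ t <= (\sum_(i | P i) F i) `^ t.
Proof.
move=> F0 t1; have t0 : 0 < t by exact: lt_le_trans t1.
set S := \sum_(i | P i) F i; have S0 : 0 <= S by exact: sumr_ge0.
apply: le_trans (_ : \sum_(i | P i) F i * S `^ (t - 1) <= _).
  apply: ler_sum => i Pi; rewrite -mulr_powRB1 ?F0 // ler_wpM2l ?F0 //.
  apply: ge0_ler_powR; rewrite ?nnegrE ?subr_ge0 ?F0 //.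
  by rewrite /S (bigD1 i) //= lerDl sumr_ge0 // => j /andP[/F0].
by rewrite -mulr_suml mulr_powRB1.
Qed.

End PowRInequalities.

Section CostBounds.
Context {R : realType} {q : nat} {alpha : 'I_q -> R} {E : finType}.
Context {sigma : E -> R} {xi : E -> 'I_q -> R}.
Hypothesis alpha_gt1 : forall j, 1 < alpha j.
Hypothesis sigma_ge0 : forall e, 0 <= sigma e.
Hypothesis xi_ge0 : forall e j, 0 <= xi e j.
Hypothesis xi_gt0 : forall e, exists j, 0 < xi e j.

Let gamma := gamma_alpha alpha sigma xi.
Let F := Fcost alpha sigma xi.

Lemma gamma_alpha_ge e : exists2 j, 0 < xi e j &
  ((alpha j - 1)^-1 * (sigma e / xi e j)) `^ (alpha j)^-1 <= gamma.
Proof.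
pose g e j := ((alpha j - 1)^-1 * (sigma e / xi e j)) `^ (alpha j)^-1.
have min_attained e' : exists2 j, xi e' j != 0 &
    \big[Order.min/+oo%E]_(j < q | xi e' j != 0) (g e' j)%:E = (g e' j)%:E.
  have [j0 xj0] := xi_gt0 e'; have {}xj0 : xi e' j0 != 0 by rewrite gt_eqF.
  have [j xj ->] := eq_bigmin j0 (fun j => xi e' j != 0)
    (fun j => (g e' j)%:E) xj0 (fun i _ => leey _).
  by exists j.
have [j xj gj] := min_attained e.
exists j; first by rewrite lt_def xj xi_ge0.
have max_fin : (\big[Order.max/0%E]_e'
    \big[Order.min/+oo%E]_(j < q | xi e' j != 0) (g e' j)%:E) \is a fin_num.
  apply: (big_ind (fun v : \bar R => v \is a fin_num)) => //.
    by move=> u v uf vf; rewrite /Order.max; case: ifP.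
  by move=> e' _; have [j' _ ->] := min_attained e'.
by rewrite /gamma /gamma_alpha -/g -lee_fin (fineK max_fin) -gj le_bigmax.
Qed.

Lemma sum_powR_le_Fcost e (l : nat) :
  \sum_(j < q) xi e j * l%:R `^ alpha j <= F e l.
Proof.
rewrite /F /Fcost; case: eqP => [->|_]; last by rewrite lerDr.
rewrite big1 // => j _; rewrite powR0 ?mulr0 // gt_eqF //.
exact: lt_trans (alpha_gt1 j).
Qed.

Lemma sigma_mul_le_gamma_Fcost e (l : nat) : sigma e * l%:R <= gamma * F e l.
Proof.
have [->|l_gt0] := posnP l; first by rewrite /F /Fcost eqxx !mulr0.
have [j xj gj] := gamma_alpha_ge e.
have := mulr_le_powR_cost _ _ _ _ (sigma_ge0 e) xj (alpha_gt1 j) (ler0n _ l).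
move=> /le_trans; apply.
apply: ler_pM; rewrite ?powR_ge0 ?addr_ge0 ?mulr_ge0 ?powR_ge0 //.
rewrite /F /Fcost (negbTE (lt0n_neq0 l_gt0)) lerD2l (bigD1 j) //= lerDl.
by rewrite sumr_ge0 // => j' _; rewrite mulr_ge0 ?powR_ge0.
Qed.

End CostBounds.

Section Deviation.
Context {E : finType} {N : nat}.

Lemma valid_upd {Pset : 'I_N -> {set {set E}}} {p p' : profile E N} i :
  valid Pset p -> valid Pset p' -> valid Pset (upd p p' i).
Proof. by move=> vp vp' j; rewrite /upd ffunE; case: eqP => [->|_]. Qed.

Lemma load_upd_le (w : 'I_N -> E -> nat) (p p' : profile E N) i e :
  (load w (upd p p' i) e <= load w p e + w i e)%N.
Proof.
rewrite /load (big_mkcond (fun j => e \in upd p p' i j)).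
rewrite (big_mkcond (fun j => e \in p j)) /=.
rewrite (bigD1 i) // [X in (_ <= X + _)%N](bigD1 i) //= addnC.
rewrite leq_add //; last by case: ifP.
rewrite (eq_bigr (fun j => if e \in p j then w j e else 0%N)) ?leq_addl //.
by move=> j /negbTE ji; rewrite /upd ffunE ji.
Qed.

End Deviation.

Section RepLambda.
Context {R : realType} {q : nat} (alpha : 'I_q -> R) {K : 'I_q -> nat}.
Variable z : forall j, 'I_(K j) -> R.
Hypothesis z_ge0 : forall j k, 0 <= z j k.

Definition rep_lambda : R := 1 + \sum_j split_coef (alpha j) (z j).

Lemma rep_lambda_gt0 : 0 < rep_lambda.
Proof.
by rewrite ltr_wpDr // sumr_ge0 // => j _; apply: split_coef_ge0.
Qed.

Lemma split_coef_le_rep_lambda j : split_coef (alpha j) (z j) <= rep_lambda.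
Proof.
rewrite /rep_lambda (bigD1 j) //= addrCA lerDl addr_ge0 //.
by rewrite sumr_ge0 // => j' _; apply: split_coef_ge0.
Qed.

End RepLambda.

Section ResourceSmoothness.
Context {R : realType} {q : nat} {alpha : 'I_q -> R} {K : 'I_q -> nat}.
Context {x y z : forall j : 'I_q, 'I_(K j) -> R}.
Context {E : finType} {N : nat} {Pset : 'I_N -> {set {set E}}}.
Context {w : 'I_N -> E -> nat} {sigma : E -> R} {xi : E -> 'I_q -> R}.
Context {f : 'I_N -> E -> profile E N -> R}.
Hypothesis alpha_gt1 : forall j, 1 < alpha j.
Hypothesis z_ge0 : forall j k, 0 <= z j k.
Hypothesis x_bound : forall j k, 0 <= x j k <= alpha j - 1.
Hypothesis xy_sum : forall j k, x j k + y j k = alpha j.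
Hypothesis w_ge1 : forall i e, (1 <= w i e)%N.
Hypothesis sigma_ge0 : forall e, 0 <= sigma e.
Hypothesis xi_ge0 : forall e j, 0 <= xi e j.
Hypothesis xi_gt0 : forall e, exists j, 0 < xi e j.
Hypothesis share_eq0 : forall p i e, valid Pset p -> e \notin p i -> f i e p = 0.
Hypothesis rep : REP_bound sigma xi x y z Pset w f.

Let y_ge1 j k : 1 <= y j k.
Proof. by have := xy_sum j k; have /andP[] := x_bound j k; lra. Qed.

Let rep_sum (l L : nat) e :=
  \sum_(j < q) xi e j * \sum_(k < K j) z j k * L%:R `^ x j k * l%:R `^ y j k.

Lemma cost_share_upd_le p p' i e : valid Pset p -> valid Pset p' ->
  e \in p' i -> f i e (upd p p' i) <= sigma e + rep_sum (w i e) (load w p e) e.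
Proof.
move=> vp vp' ep'i; have epi : e \in upd p p' i i by rewrite ffunE eqxx.
apply: le_trans (rep _ _ _ (valid_upd i vp vp') epi) _.
rewrite lerD2l ler_sum // => j _; rewrite ler_wpM2l // ler_sum // => k _.
rewrite ler_wpM2r ?powR_ge0 // ler_wpM2l // ge0_ler_powR ?nnegrE //.
  by have /andP[] := x_bound j k.
by rewrite ler_nat leq_subLR addnC load_upd_le.
Qed.

Lemma sum_cost_share_upd_le p p' e : valid Pset p -> valid Pset p' ->
  \sum_i f i e (upd p p' i) <=
    sigma e * (load w p' e)%:R + rep_sum (load w p' e) (load w p e) e.
Proof.
move=> vp vp'; rewrite (bigID (fun i => e \in p' i)) /=.
rewrite [X in _ + X]big1 ?addr0 => [|i /negbTE ep'i]; last first.
  by rewrite share_eq0 //; [exact: valid_upd | rewrite ffunE eqxx ep'i].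
apply: le_trans (ler_sum _ (fun i => cost_share_upd_le _ _ i e vp vp')) _.
rewrite big_split /=; apply: lerD.
  rewrite /load natr_sum mulr_sumr ler_sum // => i _.
  by rewrite ler_peMr // ler1n.
rewrite /rep_sum exchange_big ler_sum //= => j _; rewrite -mulr_sumr ler_wpM2l //.
rewrite exchange_big ler_sum //= => k _.
rewrite -mulr_sumr ler_wpM2l ?mulr_ge0 ?powR_ge0 //.
by rewrite /load natr_sum sum_powR_le_powR_sum.
Qed.

Lemma sum_cost_share_upd_le_Fcost p p' e rho :
  valid Pset p -> valid Pset p' -> 1 <= rho ->
  \sum_i f i e (upd p p' i) <=
    (gamma_alpha alpha sigma xi + rep_lambda alpha z * rho `^ max_alpha alpha)
      * Fcost alpha sigma xi e (load w p' e)
    + (2 * rho)^-1 * Fcost alpha sigma xi e (load w p e).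
Proof.
move=> vp vp' rho1; set l' := load w p' e; set L := load w p e.
have rho_alpha j : rho `^ (alpha j - 1) <= rho `^ max_alpha alpha.
  by rewrite ler_powR // (le_trans _ (le_bigmax _ _ j)) // gerBl.
have rep_sum_le : rep_sum l' L e <=
    rep_lambda alpha z * rho `^ max_alpha alpha * \sum_j xi e j * l'%:R `^ alpha j
    + (2 * rho)^-1 * \sum_j xi e j * L%:R `^ alpha j.
  rewrite !mulr_sumr -big_split ler_sum // => j _.
  apply: le_trans (ler_wpM2l (xi_ge0 e j) (sum_mul_powR_le_split _ _ _ _ _ _ _
    (ler0n _ L) (ler0n _ l') rho1 (z_ge0 j) (x_bound j) (xy_sum j))) _.
  rewrite mulrDr; apply: lerD; last by rewrite mulrCA.
  rewrite [X in _ <= X]mulrCA ler_wpM2l // ler_wpM2r ?powR_ge0 //.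
  by rewrite ler_pM ?split_coef_ge0 ?powR_ge0 ?split_coef_le_rep_lambda.
apply: le_trans (sum_cost_share_upd_le p p' e vp vp') _.
rewrite mulrDl -addrA lerD //; first exact: sigma_mul_le_gamma_Fcost.
apply: le_trans rep_sum_le _.
have lam_rho_ge0 : 0 <= rep_lambda alpha z * rho `^ max_alpha alpha.
  by rewrite mulr_ge0 ?powR_ge0 // ltW // rep_lambda_gt0.
have rho_ge0 : 0 <= (2 * rho)^-1 by rewrite invr_ge0 mulr_ge0 // (le_trans ler01).
by rewrite lerD // ler_wpM2l // sum_powR_le_Fcost.
Qed.

End ResourceSmoothness.

Theorem theorem6p1 (R : realType) (q : nat) (alpha : 'I_q -> R)
  (K : 'I_q -> nat) (z : forall j : 'I_q, 'I_(K j) -> R) :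
  (0 < q)%N ->
  (forall j, 1 < alpha j) ->
  (forall j k, 0 <= z j k) ->
  exists lam : R, 0 < lam /\
  forall (x y : forall j : 'I_q, 'I_(K j) -> R),
  (forall j k, 0 <= x j k <= alpha j - 1) ->
  (forall j k, 1 <= y j k <= alpha j) ->
  (forall j k, x j k + y j k = alpha j) ->
  forall (E : finType) (N : nat) (Pset : 'I_N -> {set {set E}})
         (w : 'I_N -> E -> nat) (sigma : E -> R) (xi : E -> 'I_q -> R)
         (f : 'I_N -> E -> profile E N -> R),
  (forall i e, (1 <= w i e)%N) ->
  (forall e, 0 <= sigma e) ->
  (forall e j, 0 <= xi e j) ->
  (forall e, exists j, 0 < xi e j) ->
  is_CSM alpha sigma xi Pset w f ->
  REP_bound sigma xi x y z Pset w f ->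
  forall rho : R, 1 <= rho ->
  smooth alpha sigma xi Pset w f
    (gamma_alpha alpha sigma xi + lam * rho `^ max_alpha alpha) (2 * rho)^-1.
Proof.
move=> _ alpha_gt1 z_ge0; exists (rep_lambda alpha z).
split=> [|x y x_bound _ xy_sum E N Pset w sigma xi f w_ge1 sigma_ge0 xi_ge0 xi_gt0
          [_ _ share_eq0 _] rep rho rho1 p p' vp vp'].
  exact: rep_lambda_gt0.
rewrite /indiv_cost /total_cost exchange_big /= !mulr_sumr -big_split /=.
apply: ler_sum => e _.
exact: (sum_cost_share_upd_le_Fcost alpha_gt1 z_ge0 x_bound xy_sum w_ge1
  sigma_ge0 xi_ge0 xi_gt0 share_eq0 rep).
Qed.
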